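(* If an irreducible billiard-like interval exchange transformation $f$ of $I=[-1,1)$ satisfies the modified Keane condition, then $f$ is minimal, i.e. every orbit of $f$ is dense in $I$.
   Context: An interval exchange transformation of $I=[-1,1)$: a finite partition $\{I_\alpha\}_{\alpha\in\mathcal{A}}$ of $I$ into intervals closed on the left and open on the right ($|\mathcal{A}|\ge2$), and a bijection $f:I\to I$ whose restriction to each $I_\alpha$ is a translation; let $\pi_0:\mathcal{A}\to\{1,\dots,|\mathcal{A}|\}$ give the order of the intervals $I_\alpha$ in $I$ from left to right, and let $p_\alpha$ be the left endpoint of $I_\alpha$. $f$ is irreducible if for no $k<|\mathcal{A}|$ the union $I_{\pi_0^{-1}(1)}\cup\dots\cup I_{\pi_0^{-1}(k)}$ is invariant under $f$. $f$ is billiard-like if: each $I_\alpha$ is contained in $[-1,0)$ or in $[0,1)$; each $f(I_\alpha)$ is contained in $[-1,0)$ or in $[0,1)$; and each of $[-1,0)$, $[0,1)$ contains at least two intervals of the partition. A billiard-like $f$ satisfies the modified Keane condition if $f^m(p_\alpha)\ne p_\beta$ for all $m\ge1$, all $\alpha\in\mathcal{A}$, and all $\beta\in\mathcal{A}$ with $p_\beta\notin\{-1,0\}$. *)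

From Stdlib Require Import Reals Lra Lia.
Open Scope R_scope.

Definition inI (x : R) : Prop := -1 <= x < 1.

(* A partition of I into n intervals closed on the left, open on the right,
   listed from left to right (so the labelling pi0 is the identity):
   I_k = [p k, p (k+1)) for k < n, with p 0 = -1, p n = 1, p strictly increasing. *)
Definition is_partition (n : nat) (p : nat -> R) : Prop :=
  p 0%nat = -1 /\ p n = 1 /\ (forall k, (k < n)%nat -> p k < p (S k)).

Definition inIk (p : nat -> R) (k : nat) (x : R) : Prop := p k <= x < p (S k).

Definition is_IET (n : nat) (p : nat -> R) (f : R -> R) : Prop :=
  (2 <= n)%nat /\ is_partition n p /\
  (forall x, inI x -> inI (f x)) /\
  (forall x y, inI x -> inI y -> f x = f y -> x = y) /\
  (forall y, inI y -> exists x, inI x /\ f x = y) /\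
  (forall k, (k < n)%nat -> exists t, forall x, inIk p k x -> f x = x + t).

Definition invariant (f : R -> R) (U : R -> Prop) : Prop :=
  forall x, U x -> U (f x).

Definition first_union (p : nat -> R) (k : nat) (x : R) : Prop :=
  exists j, (j < k)%nat /\ inIk p j x.

Definition irreducible (n : nat) (p : nat -> R) (f : R -> R) : Prop :=
  forall k, (1 <= k)%nat -> (k < n)%nat -> ~ invariant f (first_union p k).

Definition in_left (x : R) : Prop := -1 <= x < 0.
Definition in_right (x : R) : Prop := 0 <= x < 1.

Definition billiard_like (n : nat) (p : nat -> R) (f : R -> R) : Prop :=
  (forall k, (k < n)%nat ->
     (forall x, inIk p k x -> in_left x) \/ (forall x, inIk p k x -> in_right x)) /\
  (forall k, (k < n)%nat ->
     (forall x, inIk p k x -> in_left (f x)) \/ (forall x, inIk p k x -> in_right (f x))) /\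
  (exists k1 k2, (k1 < n)%nat /\ (k2 < n)%nat /\ k1 <> k2 /\
     (forall x, inIk p k1 x -> in_left x) /\ (forall x, inIk p k2 x -> in_left x)) /\
  (exists k1 k2, (k1 < n)%nat /\ (k2 < n)%nat /\ k1 <> k2 /\
     (forall x, inIk p k1 x -> in_right x) /\ (forall x, inIk p k2 x -> in_right x)).

Definition modified_keane (n : nat) (p : nat -> R) (f : R -> R) : Prop :=
  forall m a b, (1 <= m)%nat -> (a < n)%nat -> (b < n)%nat ->
    p b <> -1 -> p b <> 0 -> Nat.iter m f (p a) <> p b.

Definition in_orbit (f : R -> R) (x z : R) : Prop :=
  exists m : nat, Nat.iter m f x = z \/ Nat.iter m f z = x.

Definition minimal (f : R -> R) : Prop :=
  forall x, inI x -> forall y, inI y -> forall eps, 0 < eps ->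
    exists z, inI z /\ in_orbit f x z /\ Rabs (z - y) < eps.

From Stdlib Require Import Reals Lra Lia List ZArith ClassicalEpsilon Classical.
Open Scope R_scope.

(* Let W be a subset of I = [-1,1) that is invariant under f and open on the right
   (each w in W has [w, w+e) in W). Follow an end point y of W, or of its complement,
   along its orbit, together with the one-sided neighbourhood on which the iterate of f
   is a translation. That neighbourhood only shrinks when it swallows one of the finitely
   many discontinuities, and each is swallowed at most once because the neighbourhoods
   along an injective orbit are disjoint; a pigeonhole argument then shows that a right
   end point is periodic, and that the orbit of a non-periodic left end point meets a
   discontinuity p_b forwards and an image f(p_a) backwards. The modified Keane condition
   forces p_b = 0, and the billiard-like structure then forces y = 0. So, in the absence
   of periodic points, W is [-1,0) or [0,1) or trivial, and irreducibility excludes the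
   first two. This is applied first to the set of periodic points (where the periodic
   left end points of the complement need a separate argument) to show there are none,
   and then to the set of points having a right neighbourhood that misses a given orbit. *)

Lemma ex_least_nat (P : nat -> Prop) :
  (exists j, P j) -> exists j, P j /\ forall i, (i < j)%nat -> ~ P i.
Proof.
  intros [j Hj].
  assert (H : forall N k, (k <= N)%nat -> P k ->
            exists j, P j /\ forall i, (i < j)%nat -> ~ P i).
  { induction N as [|N IH]; intros k Hk Pk.
    - exists k; split; auto. intros i Hi; lia.
    - destruct (classic (exists i, (i < k)%nat /\ P i)) as [[i [Hi Pi]]|Hn].
      + apply (IH i); auto; lia.
      + exists k; split; auto. intros i Hi Pi; apply Hn; eauto. }
  apply (H j j); auto.
Qed.

Lemma le_of_injective_bounded (M K : nat) (k : nat -> nat) :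
  (forall i, (i <= M)%nat -> (k i <= K)%nat) ->
  (forall i j, (i <= M)%nat -> (j <= M)%nat -> k i = k j -> i = j) -> (M <= K)%nat.
Proof.
  intros Hb Hi.
  assert (Hnd : NoDup (map k (seq 0 (S M)))).
  { apply NoDup_map_NoDup_ForallPairs; [|apply seq_NoDup].
    intros a b Ha Hb' E. apply in_seq in Ha. apply in_seq in Hb'. apply Hi; auto; lia. }
  assert (Hinc : incl (map k (seq 0 (S M))) (seq 0 (S K))).
  { intros a Ha. apply in_map_iff in Ha. destruct Ha as [i [<- Hi']].
    apply in_seq in Hi'. apply in_seq. specialize (Hb i). lia. }
  pose proof (NoDup_incl_length Hnd Hinc) as L.
  rewrite length_map, !length_seq in L. lia.
Qed.

Lemma Int_part_nonneg (r : R) : 0 <= r -> (0 <= Int_part r)%Z.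
Proof.
  intros Hr. destruct (base_Int_part r) as [_ H2].
  assert (H : IZR (Int_part r) > -1) by lra.
  apply lt_IZR in H. lia.
Qed.

Lemma INR_Int_part (r : R) : 0 <= r -> INR (Z.to_nat (Int_part r)) = IZR (Int_part r).
Proof. intros Hr. rewrite INR_IZR_INZ, Z2Nat.id; auto using Int_part_nonneg. Qed.

(* Bucket the points by [floor ((s i + 1) / d)]: distinct points land in distinct buckets. *)
Lemma separated_points_bound (s : nat -> R) (M : nat) (d : R) : 0 < d ->
  (forall i, (i <= M)%nat -> -1 <= s i <= 1) ->
  (forall i j, (i <= M)%nat -> (j <= M)%nat -> i <> j -> d <= Rabs (s i - s j)) ->
  INR M * d <= 2.
Proof.
  intros Hd Hs Hsep.
  assert (Hid : 0 < / d) by (apply Rinv_0_lt_compat; lra).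
  set (r i := (s i + 1) / d).
  set (bucket i := Z.to_nat (Int_part (r i))).
  set (K := Z.to_nat (Int_part (2 / d))).
  assert (Hr : forall i, (i <= M)%nat -> 0 <= r i <= 2 / d).
  { intros i Hi. specialize (Hs i Hi). unfold r, Rdiv. split; nra. }
  assert (H2d : 0 <= 2 / d) by (unfold Rdiv; nra).
  assert (HMK : (M <= K)%nat).
  { apply (le_of_injective_bounded M K bucket).
    - intros i Hi. apply INR_le. unfold bucket, K.
      rewrite !INR_Int_part by (auto; apply Hr; auto).
      destruct (Hr i Hi) as [_ H2].
      destruct (base_Int_part (r i)) as [A1 A2]. destruct (base_Int_part (2/d)) as [B1 B2].
      assert (H : IZR (Int_part (r i)) < IZR (Int_part (2/d)) + 1) by lra.
      rewrite <- plus_IZR in H. apply lt_IZR in H. apply IZR_le. lia.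
    - intros i j Hi Hj E. destruct (Nat.eq_dec i j) as [|Hne]; auto. exfalso.
      specialize (Hsep i j Hi Hj Hne).
      assert (E' : Int_part (r i) = Int_part (r j)).
      { apply (f_equal Z.of_nat) in E. unfold bucket in E.
        rewrite !Z2Nat.id in E; auto; apply Int_part_nonneg; apply Hr; auto. }
      destruct (base_Int_part (r i)) as [A1 A2]. destruct (base_Int_part (r j)) as [B1 B2].
      rewrite E' in A1, A2.
      assert (Hrr : Rabs (r i - r j) < 1) by (apply Rabs_def1; lra).
      replace (r i - r j) with ((s i - s j) * / d) in Hrr by (unfold r; field; lra).
      rewrite Rabs_mult, (Rabs_right (/ d)) in Hrr by lra.
      apply (Rmult_lt_compat_r d) in Hrr; [|lra].
      rewrite Rmult_assoc, Rinv_l, Rmult_1_r, Rmult_1_l in Hrr by lra. lra. }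
  apply le_INR in HMK. unfold K in HMK. rewrite INR_Int_part in HMK by auto.
  destruct (base_Int_part (2/d)) as [B1 _].
  assert (H : INR M <= 2 / d) by lra.
  apply (Rmult_le_compat_r d) in H; [|lra].
  unfold Rdiv in H. rewrite Rmult_assoc, Rinv_l, Rmult_1_r in H by lra. exact H.
Qed.

Lemma no_separated_sequence (ys : nat -> R) (d : R) : 0 < d ->
  (forall j, -1 <= ys j <= 1) ->
  ~ (forall i j, i <> j -> d <= Rabs (ys i - ys j)).
Proof.
  intros Hd Hy Hsep.
  set (N := Z.to_nat (up (2 / d))).
  assert (H2d : 0 < 2 / d) by (unfold Rdiv; apply Rmult_lt_0_compat; [lra|apply Rinv_0_lt_compat; lra]).
  assert (HN : INR N > 2 / d).
  { destruct (archimed (2/d)) as [A1 _].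
    unfold N. rewrite INR_IZR_INZ, Z2Nat.id; auto. apply le_IZR. lra. }
  assert (HNd : INR N * d <= 2).
  { apply (separated_points_bound ys N d Hd); auto. }
  apply (Rmult_gt_compat_r d) in HN; [|lra].
  unfold Rdiv in HN. rewrite Rmult_assoc, Rinv_l, Rmult_1_r in HN by lra. lra.
Qed.

Lemma eventually_constant_of_finite_cuts (ds : nat -> R) (bs : list R) (Cut : nat -> R -> Prop) :
  (forall j, ds (S j) = ds j \/ exists b, In b bs /\ Cut j b) ->
  (forall i j b, Cut i b -> Cut j b -> i = j) ->
  exists J, forall k, ds (J + k)%nat = ds J.
Proof.
  intros Hstep Hu.
  assert (Hlate : forall l : list R, exists J, forall j b, (J <= j)%nat -> In b l -> ~ Cut j b).
  { induction l as [|b0 l [J HJ]].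
    - exists 0%nat. intros j b _ [].
    - destruct (classic (exists j0, Cut j0 b0)) as [[j0 Hj0]|Hn].
      + exists (Nat.max J (S j0)). intros j b Hj [<-|Hb] Hs.
        * pose proof (Hu _ _ _ Hs Hj0). lia.
        * apply (HJ j b); auto; lia.
      + exists J. intros j b Hj [<-|Hb] Hs; [apply Hn; eauto|apply (HJ j b); auto]. }
  destruct (Hlate bs) as [J HJ]. exists J.
  induction k as [|k IH]; [rewrite Nat.add_0_r; auto|].
  rewrite Nat.add_succ_r. destruct (Hstep (J + k)%nat) as [E|[b [Hb Hs]]].
  - rewrite E; auto.
  - exfalso. apply (HJ (J + k)%nat b); auto; lia.
Qed.

Definition seg (s y d z : R) : Prop := 0 < s * (z - y) < d.

(* With [s = -1], [y] is a left end point of [A]: [A] holds on [(y - d, y)] but not at [y];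
   with [s = 1] it is a right end point, [A] holding on [(y, y + d)]. *)
Definition boundary (s : R) (A : R -> Prop) (y d : R) : Prop :=
  inI y /\ ~ A y /\ 0 < d /\ forall z, seg s y d z -> A z.

Definition complI (A : R -> Prop) (z : R) : Prop := inI z /\ ~ A z.

Definition periodic (h : R -> R) (z : R) : Prop := exists m, (1 <= m)%nat /\ Nat.iter m h z = z.

Definition orbit_injective (h : R -> R) (y : R) : Prop :=
  forall i j, (i < j)%nat -> Nat.iter i h y <> Nat.iter j h y.

Definition completely_invariant (h : R -> R) (A : R -> Prop) : Prop :=
  forall z, inI z -> (A z <-> A (h z)).

Lemma boundaries_separated (s : R) (A : R -> Prop) (y1 y2 d1 d2 : R) :
  s = 1 \/ s = -1 -> boundary s A y1 d1 -> boundary s A y2 d2 -> y1 <> y2 ->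
  Rmin d1 d2 <= Rabs (y1 - y2) /\ forall b, ~ (seg s y1 d1 b /\ seg s y2 d2 b).
Proof.
  intros Hs [_ [N1 [D1 S1]]] [_ [N2 [D2 S2]]] Hne.
  assert (G1 : ~ seg s y1 d1 y2) by (intros H; exact (N2 (S1 _ H))).
  assert (G2 : ~ seg s y2 d2 y1) by (intros H; exact (N1 (S2 _ H))).
  pose proof (Rmin_l d1 d2). pose proof (Rmin_r d1 d2).
  unfold seg in *.
  destruct Hs as [-> | ->]; destruct (Rdichotomy _ _ Hne) as [Hlt|Hlt].
  - assert (d1 <= y2 - y1) by (apply Rnot_lt_le; intros Hc; apply G1; lra).
    rewrite Rabs_left by lra. split; [lra| intros b Hb; lra].
  - assert (d2 <= y1 - y2) by (apply Rnot_lt_le; intros Hc; apply G2; lra).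
    rewrite Rabs_right by lra. split; [lra| intros b Hb; lra].
  - assert (d2 <= y2 - y1) by (apply Rnot_lt_le; intros Hc; apply G2; lra).
    rewrite Rabs_left by lra. split; [lra| intros b Hb; lra].
  - assert (d1 <= y1 - y2) by (apply Rnot_lt_le; intros Hc; apply G1; lra).
    rewrite Rabs_right by lra. split; [lra| intros b Hb; lra].
Qed.

Lemma orbit_injective_neq (h : R -> R) (y : R) (i j : nat) :
  orbit_injective h y -> i <> j -> Nat.iter i h y <> Nat.iter j h y.
Proof.
  intros Hinj Hij. destruct (Nat.lt_gt_cases i j) as [[Hlt|Hlt] _]; auto.
  intros E. apply (Hinj j i Hlt). auto.
Qed.

(* The widths of the one-sided neighbourhoods can only shrink when a cut point
   enters them, and disjointness lets each cut point do so only once. *)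
Lemma boundary_orbit_absurd (s : R) (A : R -> Prop) (h : R -> R) (bs : list R) (y d : R) :
  s = 1 \/ s = -1 -> orbit_injective h y ->
  (forall j e, boundary s A (Nat.iter j h y) e ->
     exists e', 0 < e' <= e /\ (e' = e \/ exists b, In b bs /\ seg s (Nat.iter j h y) e b) /\
       boundary s A (Nat.iter (S j) h y) e') ->
  ~ boundary s A y d.
Proof.
  intros Hs Hinj Hstep Hy.
  set (ys j := Nat.iter j h y).
  assert (Hchoice : exists next : nat -> R -> R, forall j e, boundary s A (ys j) e ->
    0 < next j e <= e /\ (next j e = e \/ exists b, In b bs /\ seg s (ys j) e b) /\
    boundary s A (ys (S j)) (next j e)).
  { destruct (choice (fun (je : nat * R) e' => boundary s A (ys (fst je)) (snd je) ->
       0 < e' <= snd je /\ (e' = snd je \/ exists b, In b bs /\ seg s (ys (fst je)) (snd je) b) /\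
       boundary s A (ys (S (fst je))) e')) as [g Hg].
    - intros [j e]. destruct (classic (boundary s A (ys j) e)) as [He|He].
      + destruct (Hstep j e He) as [e' He']. exists e'. intros _. exact He'.
      + exists 0. intros Hc. contradiction.
    - exists (fun j e => g (j, e)). intros j e. apply (Hg (j, e)). }
  destruct Hchoice as [next Hnext].
  set (ds := fix ds (j : nat) : R := match j with O => d | S j' => next j' (ds j') end).
  assert (Hall : forall j, boundary s A (ys j) (ds j)).
  { induction j as [|j IH]; [exact Hy|]. apply (Hnext j (ds j) IH). }
  assert (Hconst : exists J, forall k, ds (J + k)%nat = ds J).
  { apply (eventually_constant_of_finite_cuts ds bs (fun j b => seg s (ys j) (ds j) b)).
    - intros j. apply (Hnext j (ds j) (Hall j)).
    - intros i j b Hi Hj. destruct (Nat.eq_dec i j) as [|Hne]; auto. exfalso.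
      apply (proj2 (boundaries_separated s A _ _ _ _ Hs (Hall i) (Hall j)
        (orbit_injective_neq h y i j Hinj Hne)) b). auto. }
  destruct Hconst as [J HJ].
  apply (no_separated_sequence (fun k => ys (J + k)%nat) (ds J)).
  - apply (Hall J).
  - intros k. destruct (Hall (J + k)%nat) as [Hin _]. unfold inI in Hin. lra.
  - intros i k Hne.
    destruct (boundaries_separated s A _ _ _ _ Hs (Hall (J + i)%nat) (Hall (J + k)%nat)
      (orbit_injective_neq h y (J + i) (J + k) Hinj ltac:(lia))) as [Hsep _].
    rewrite !HJ, Rmin_left in Hsep by lra. exact Hsep.
Qed.

Definition right_open (W : R -> Prop) : Prop :=
  forall w, W w -> exists e, 0 < e /\ forall u, w <= u < w + e -> W u.

Section RightOpenSets.

Variable W : R -> Prop.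
Hypothesis W_inI : forall z, W z -> inI z.
Hypothesis W_right_open : right_open W.

Lemma left_end_between (w v : R) : W w -> inI v -> ~ W v -> w < v ->
  exists y d, w < y <= v /\ boundary (-1) W y d.
Proof.
  intros Hw Hv Hnv Hwv.
  set (T := fun z => w <= z <= v /\ forall u, w <= u < z -> W u).
  assert (Hb : bound T) by (exists v; intros z [Hz _]; lra).
  assert (Hne : exists z, T z) by (exists w; split; [lra| intros u Hu; lra]).
  destruct (completeness T Hb Hne) as [s [Hub Hleast]].
  assert (Hsv : s <= v) by (apply Hleast; intros z [Hz _]; lra).
  assert (HW : forall u, w <= u < s -> W u).
  { intros u Hu. apply NNPP. intros Hnu.
    assert (s <= u); [|lra].
    apply Hleast. intros z [Hz Hz']. apply Rnot_lt_le. intros Hc. apply Hnu, Hz'. lra. }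
  assert (Hextend : forall z e, W z -> w <= z <= s -> z < v -> 0 < e ->
            (forall u, z <= u < z + e -> W u) -> Rmin (z + e/2) v <= s).
  { intros z e Hz Hzs Hzv He Hre. apply Hub. split.
    - split; [apply Rmin_glb; lra| apply Rmin_r].
    - intros u Hu. pose proof (Rmin_l (z + e/2) v).
      destruct (Rlt_le_dec u z); [apply HW; lra| apply Hre; lra]. }
  assert (Hws : w < s).
  { destruct (W_right_open w Hw) as [e [He Hre]].
    assert (Hws_le : w <= s) by (apply Hub; split; [lra| intros u Hu; lra]).
    pose proof (Hextend w e Hw ltac:(lra) Hwv He Hre).
    assert (w < Rmin (w + e/2) v) by (apply Rmin_glb_lt; lra). lra. }
  assert (Hns : ~ W s).
  { intros Hs. destruct (Rle_lt_or_eq_dec s v Hsv) as [Hlt|E]; [|subst; contradiction].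
    destruct (W_right_open s Hs) as [e [He Hre]].
    pose proof (Hextend s e Hs ltac:(lra) Hlt He Hre).
    assert (s < Rmin (s + e/2) v) by (apply Rmin_glb_lt; lra). lra. }
  pose proof (W_inI w Hw). unfold inI in *.
  exists s, (s - w). split; [lra|]. unfold boundary, seg, inI.
  split; [lra|]. split; auto. split; [lra|]. intros z Hz. apply HW. lra.
Qed.

(* [s] is the supremum of the points of [[v, w]] outside [W]. *)
Lemma boundary_between (v w : R) : inI v -> ~ W v -> W w -> v < w ->
  exists y d, v <= y <= w /\
    (boundary 1 W y d \/ v < y /\ (boundary (-1) (complI W) y d \/ boundary (-1) W y d)).
Proof.
  intros Hv Hnv Hw Hvw. pose proof (W_inI w Hw) as Hwi.
  set (T := fun z => v <= z <= w /\ ~ W z).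
  assert (Hb : bound T) by (exists w; intros z [Hz _]; lra).
  assert (Hne : exists z, T z) by (exists v; split; [lra| auto]).
  destruct (completeness T Hb Hne) as [s [Hub Hleast]].
  assert (Hvs : v <= s) by (apply Hub; split; [lra| auto]).
  assert (Hsw : s <= w) by (apply Hleast; intros z [Hz _]; lra).
  assert (HW : forall u, s < u <= w -> W u).
  { intros u Hu. apply NNPP. intros Hnu.
    assert (u <= s) by (apply Hub; split; [lra| auto]). lra. }
  unfold inI in *.
  destruct (classic (W s)) as [Hs|Hns].
  2:{ assert (Hsw' : s < w) by (destruct Hsw as [|E]; auto; subst; contradiction).
      exists s, (w - s). split; [lra|]. left. unfold boundary, seg, inI.
      split; [lra|]. split; auto. split; [lra|]. intros z Hz. apply HW; lra. }
  assert (Hvs' : v < s) by (destruct Hvs as [|E]; auto; subst; contradiction).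
  destruct (classic (exists e, 0 < e /\ forall u, s - e < u < s -> ~ W u)) as [[e [He He']]|Hno].
  - exists s, (Rmin e (s - v)). split; [lra|]. right. split; [lra|]. left.
    pose proof (Rmin_l e (s - v)). pose proof (Rmin_r e (s - v)).
    unfold boundary, seg, complI, inI.
    split; [lra|]. split; [tauto|]. split; [apply Rmin_glb_lt; lra|].
    intros z Hz. split; [lra|]. apply He'. lra.
  - assert (Hu : exists u, s - (s - v) < u < s /\ W u).
    { apply NNPP. intros Hc. apply Hno. exists (s - v). split; [lra|].
      intros u Hu Hwu. apply Hc. exists u. auto. }
    destruct Hu as [u [Hu Hwu]].
    assert (Hz : exists z, T z /\ u < z).
    { apply NNPP. intros Hc.
      assert (s <= u); [|lra].
      apply Hleast. intros z Tz. apply Rnot_lt_le. intros Hlt. apply Hc. eauto. }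
    destruct Hz as [z [[Hz1 Hz2] Huz]].
    assert (Hzs : z <= s) by (apply Hub; split; auto).
    assert (Hzs' : z < s) by (destruct Hzs as [|E]; auto; subst; contradiction).
    destruct (left_end_between u z Hwu ltac:(unfold inI; lra) Hz2 Huz) as [y [d [Hy Hl]]].
    exists y, d. split; [lra|]. right. split; [lra|]. right. exact Hl.
Qed.

Hypothesis W_left_ends : forall y d, boundary (-1) W y d -> y = 0.
Hypothesis complI_left_ends : forall y d, boundary (-1) (complI W) y d -> y = 0.
Hypothesis W_no_right_end : forall y d, ~ boundary 1 W y d.

Lemma constant_on_halves (z1 z2 : R) : inI z1 -> inI z2 -> z1 <= z2 ->
  z2 < 0 \/ 0 <= z1 -> (W z1 <-> W z2).
Proof.
  intros H1 H2 Hle Hside.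
  destruct (Rle_lt_or_eq_dec _ _ Hle) as [Hlt|<-]; [|tauto].
  split; intros HW; apply NNPP; intros HnW.
  - destruct (left_end_between z1 z2 HW H2 HnW Hlt) as [y [d [Hy Hl]]].
    pose proof (W_left_ends y d Hl). lra.
  - destruct (boundary_between z1 z2 H1 HnW HW Hlt) as [y [d [Hy [Hr|[Hy' [Hl|Hl]]]]]].
    + exact (W_no_right_end y d Hr).
    + pose proof (complI_left_ends y d Hl). lra.
    + pose proof (W_left_ends y d Hl). lra.
Qed.

Lemma left_half_or_complement : (exists w, W w) -> (exists v, complI W v) ->
  (forall z, inI z -> (W z <-> in_left z)) \/ (forall z, inI z -> (complI W z <-> in_left z)).
Proof.
  intros [w Hw] [v [Hv Hnv]].
  assert (Hm1 : inI (-1)) by (unfold inI; lra).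
  assert (H0 : inI 0) by (unfold inI; lra).
  assert (Hhalf : forall z, inI z -> (W z <-> if Rlt_dec z 0 then W (-1) else W 0)).
  { intros z Hz. symmetry. destruct (Rlt_dec z 0); apply constant_on_halves; auto;
      unfold inI in Hz; lra. }
  unfold complI, in_left, inI in *.
  destruct (classic (W (-1))) as [Hl|Hl]; destruct (classic (W 0)) as [Hr|Hr].
  - exfalso. apply Hnv. apply Hhalf; auto. destruct (Rlt_dec v 0); auto.
  - left. intros z Hz. rewrite Hhalf by auto. destruct (Rlt_dec z 0); split; intros; first [contradiction | lra | auto].
  - right. intros z Hz. rewrite Hhalf by auto. destruct (Rlt_dec z 0); tauto.
  - exfalso. rewrite Hhalf in Hw by auto. destruct (Rlt_dec w 0); auto.
Qed.

End RightOpenSets.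

Section MapsOfI.

Variable h : R -> R.
Hypothesis h_inI : forall z, inI z -> inI (h z).

Lemma iter_inI (m : nat) (x : R) : inI x -> inI (Nat.iter m h x).
Proof. induction m as [|m IH]; intros Hx; simpl; auto. Qed.

Lemma iter_injective (m : nat) (x y : R) :
  (forall x y, inI x -> inI y -> h x = h y -> x = y) ->
  inI x -> inI y -> Nat.iter m h x = Nat.iter m h y -> x = y.
Proof.
  intros Hinj. revert x y. induction m as [|m IH]; intros x y Hx Hy E; auto.
  apply IH; auto. apply Hinj; auto using iter_inI.
Qed.

Lemma orbit_injective_of_aperiodic (y : R) :
  (forall x y, inI x -> inI y -> h x = h y -> x = y) ->
  inI y -> ~ periodic h y -> orbit_injective h y.
Proof.
  intros Hinj Hy Hnp i j Hij E. apply Hnp. exists (j - i)%nat. split; [lia|].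
  replace j with (i + (j - i))%nat in E by lia.
  rewrite Nat.iter_add in E.
  symmetry. apply (iter_injective i); auto using iter_inI.
Qed.

Lemma boundary_translate (s : R) (A : R -> Prop) (y d d' t : R) :
  (forall z, A z -> inI z) -> completely_invariant h A -> boundary s A y d -> 0 < d' <= d ->
  (forall u, u = y \/ seg s y d' u -> h u = u + t) -> boundary s A (h y) d'.
Proof.
  intros A_inI Ainv [Hy [HnA [Hd Hseg]]] Hd' Ht.
  assert (Hhy : h y = y + t) by (apply Ht; auto).
  split; [auto|]. split; [rewrite <- (Ainv y Hy); auto|]. split; [lra|].
  intros z Hz.
  assert (Hw : seg s y d' (z - t)) by (unfold seg in *; rewrite Hhy in Hz;
    replace (s * (z - t - y)) with (s * (z - (y + t))) by ring; auto).
  assert (HAw : A (z - t)) by (apply Hseg; unfold seg in *; lra).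
  replace z with (h (z - t)) by (rewrite Ht; [ring|]; right; exact Hw).
  apply (Ainv (z - t)); auto.
Qed.

End MapsOfI.

Lemma left_end_bounds (A : R -> Prop) (y d : R) :
  (forall z, A z -> inI z) -> boundary (-1) A y d -> -1 <= y - d.
Proof.
  intros A_inI [Hy [_ [Hd Hseg]]]. apply Rnot_lt_le. intros Hc.
  assert (Hz : inI ((y - d - 1) / 2)) by (apply A_inI, Hseg; unfold seg, inI in *; lra).
  unfold inI in Hz. lra.
Qed.

Lemma right_end_bounds (A : R -> Prop) (y d : R) :
  (forall z, A z -> inI z) -> boundary 1 A y d -> y + d <= 1.
Proof.
  intros A_inI [Hy [_ [Hd Hseg]]]. apply Rnot_lt_le. intros Hc.
  assert (Hz : inI ((y + d + 1) / 2)) by (apply A_inI, Hseg; unfold seg, inI in *; lra).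
  unfold inI in Hz. lra.
Qed.

Definition left_translation_step (h : R -> R) (bs : list R) : Prop :=
  forall y d, 0 < d -> -1 <= y - d -> y < 1 -> ~ In y bs ->
  exists d', 0 < d' <= d /\ (d' = d \/ exists b, In b bs /\ seg (-1) y d b) /\
    exists t, forall u, y - d' <= u <= y -> h u = u + t.

Section LeftEnds.

Variables (h : R -> R) (bs : list R) (A : R -> Prop).
Hypothesis h_inI : forall z, inI z -> inI (h z).
Hypothesis h_step : left_translation_step h bs.
Hypothesis A_inI : forall z, A z -> inI z.
Hypothesis A_invariant : completely_invariant h A.

Lemma left_end_step (y d : R) : boundary (-1) A y d -> ~ In y bs ->
  exists d', 0 < d' <= d /\ (d' = d \/ exists b, In b bs /\ seg (-1) y d b) /\
    boundary (-1) A (h y) d'.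
Proof.
  intros Hl Hn. pose proof (left_end_bounds A y d A_inI Hl) as Hyd.
  pose proof Hl as [Hy [_ [Hd _]]].
  destruct (h_step y d Hd Hyd ltac:(unfold inI in Hy; lra) Hn) as [d' [Hd' [Hcut [t Ht]]]].
  exists d'. split; auto. split; auto.
  apply (boundary_translate h h_inI (-1) A y d d' t); auto.
  intros u [->|Hu]; apply Ht; unfold seg in *; lra.
Qed.

Lemma left_end_orbit_meets_cuts (y d : R) :
  orbit_injective h y -> boundary (-1) A y d -> exists j, In (Nat.iter j h y) bs.
Proof.
  intros Hinj Hl. apply NNPP. intros Hno.
  apply (boundary_orbit_absurd (-1) A h bs y d); auto.
  intros j e He. apply left_end_step; auto. intros Hin. apply Hno. eauto.
Qed.

Lemma left_end_persists (y d : R) (j : nat) : boundary (-1) A y d ->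
  (forall i, (i < j)%nat -> ~ In (Nat.iter i h y) bs) ->
  forall i, (i <= j)%nat -> exists e, boundary (-1) A (Nat.iter i h y) e.
Proof.
  intros Hl Hj. induction i as [|i IH]; intros Hi; [exists d; exact Hl|].
  destruct (IH ltac:(lia)) as [e He].
  destruct (left_end_step _ e He (Hj i ltac:(lia))) as [e' [_ [_ He']]].
  exists e'. exact He'.
Qed.

End LeftEnds.

Lemma complI_invariant (h : R -> R) (A : R -> Prop) :
  (forall z, inI z -> inI (h z)) -> completely_invariant h A -> completely_invariant h (complI A).
Proof.
  intros h_inI Ainv z Hz. unfold complI. rewrite (Ainv z Hz).
  split; intros [_ HnA]; split; auto.
Qed.

Section Partition.

Variables (n : nat) (p : nat -> R).
Hypothesis Hp : is_partition n p.

Lemma partition_lt (i j : nat) : (i < j)%nat -> (j <= n)%nat -> p i < p j.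
Proof.
  destruct Hp as [_ [_ Hinc]]. intros Hij. induction j as [|j IH]; intros Hj; [lia|].
  destruct (Nat.eq_dec i j) as [->|Hne]; [apply Hinc; lia|].
  apply Rlt_trans with (p j); [apply IH; lia| apply Hinc; lia].
Qed.

Lemma partition_le (i j : nat) : (i <= j)%nat -> (j <= n)%nat -> p i <= p j.
Proof.
  intros Hij Hj. destruct (Nat.eq_dec i j) as [->|]; [lra|].
  left; apply partition_lt; lia.
Qed.

Lemma partition_gt_m1 (k : nat) : (1 <= k <= n)%nat -> -1 < p k.
Proof. intros Hk. destruct Hp as [H0 _]. rewrite <- H0. apply partition_lt; lia. Qed.

Lemma partition_cover (x : R) : inI x -> exists k, (k < n)%nat /\ inIk p k x.
Proof.
  intros Hx. destruct Hp as [H0 [H1 _]].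
  assert (G : forall j, (j <= n)%nat -> x < p j -> exists k, (k < j)%nat /\ inIk p k x).
  { induction j as [|j IH]; intros Hj Hxj; [unfold inI in Hx; lra|].
    destruct (Rlt_dec x (p j)) as [Hl|Hl].
    - destruct (IH ltac:(lia) Hl) as [k [Hk Hk']]. exists k; split; auto.
    - exists j; split; auto. unfold inIk; lra. }
  destruct (G n ltac:(lia)) as [k [Hk Hk']]; [unfold inI in Hx; lra|].
  eauto.
Qed.

Lemma partition_point_inIk (k : nat) : (k < n)%nat -> inIk p k (p k).
Proof. destruct Hp as [_ [_ Hinc]]. intros Hk. unfold inIk. specialize (Hinc k Hk). lra. Qed.

Lemma partition_point_inI (k : nat) : (k < n)%nat -> inI (p k).
Proof.
  intros Hk. destruct Hp as [H0 [H1 _]]. unfold inI. split.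
  - rewrite <- H0. apply partition_le; lia.
  - rewrite <- H1. apply partition_lt; lia.
Qed.

End Partition.

Definition finv (f : R -> R) (y : R) : R := epsilon (inhabits 0) (fun x => inI x /\ f x = y).

Definition avoids_orbit (f : R -> R) (x z : R) : Prop :=
  inI z /\ exists d, 0 < d /\ forall u, z <= u < z + d -> ~ (inI u /\ in_orbit f x u).

Section IntervalExchange.

Variables (n : nat) (p : nat -> R) (f : R -> R).
Hypothesis Hf : is_IET n p f.

Lemma two_le_n : (2 <= n)%nat.
Proof. apply Hf. Qed.

Lemma iet_partition : is_partition n p.
Proof. apply Hf. Qed.

Lemma f_inI (x : R) : inI x -> inI (f x).
Proof. apply Hf. Qed.

Lemma f_injective (x y : R) : inI x -> inI y -> f x = f y -> x = y.
Proof. apply Hf. Qed.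

Lemma f_translation (k : nat) : (k < n)%nat -> exists t, forall x, inIk p k x -> f x = x + t.
Proof. apply Hf. Qed.

Lemma finv_spec (y : R) : inI y -> inI (finv f y) /\ f (finv f y) = y.
Proof.
  intros Hy. unfold finv. apply epsilon_spec.
  destruct Hf as [_ [_ [_ [_ [Hs _]]]]]. apply Hs; auto.
Qed.

Lemma finv_inI (y : R) : inI y -> inI (finv f y).
Proof. intros Hy. apply (finv_spec y Hy). Qed.

Lemma finv_f (z : R) : inI z -> finv f (f z) = z.
Proof.
  intros Hz. destruct (finv_spec (f z)) as [A B]; [apply f_inI; auto|].
  apply f_injective; auto.
Qed.

Lemma finv_injective (x y : R) : inI x -> inI y -> finv f x = finv f y -> x = y.
Proof.
  intros Hx Hy E. rewrite <- (proj2 (finv_spec x Hx)), <- (proj2 (finv_spec y Hy)), E.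
  reflexivity.
Qed.

Lemma f_iter_finv (k : nat) (y : R) : inI y -> Nat.iter k f (Nat.iter k (finv f) y) = y.
Proof.
  revert y. induction k as [|k IH]; intros y Hy; [reflexivity|].
  rewrite Nat.iter_succ_r, Nat.iter_succ, (proj2 (finv_spec _ (iter_inI _ finv_inI k y Hy))).
  auto.
Qed.

Lemma finv_invariant (A : R -> Prop) : completely_invariant f A -> completely_invariant (finv f) A.
Proof.
  intros Ainv z Hz. destruct (finv_spec z Hz) as [G1 G2].
  rewrite (Ainv _ G1), G2. tauto.
Qed.

Lemma aperiodic_finv (y : R) : inI y -> ~ periodic f y -> ~ periodic (finv f) y.
Proof.
  intros Hy Hnp [m [Hm E]]. apply Hnp. exists m. split; auto.
  rewrite <- E at 1. apply f_iter_finv; auto.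
Qed.

(* Away from these points [f], respectively its inverse, is a translation on a
   left neighbourhood. *)
Definition cuts : list R := map p (seq 1 (n - 1)).
Definition image_cuts : list R := map (fun k => f (p k)) (seq 0 n).

Lemma In_cuts (b : R) : In b cuts <-> exists k, (1 <= k < n)%nat /\ p k = b.
Proof.
  pose proof two_le_n. unfold cuts. rewrite in_map_iff. split.
  - intros [k [E Hk]]. apply in_seq in Hk. exists k; split; auto; lia.
  - intros [k [Hk E]]. exists k; split; auto. apply in_seq; lia.
Qed.

Lemma In_image_cuts (b : R) : In b image_cuts <-> exists k, (k < n)%nat /\ f (p k) = b.
Proof.
  unfold image_cuts. rewrite in_map_iff. split.
  - intros [k [E Hk]]. apply in_seq in Hk. exists k; split; auto; lia.
  - intros [k [Hk E]]. exists k; split; auto. apply in_seq; lia.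
Qed.

Lemma f_left_step : left_translation_step f cuts.
Proof.
  intros y d Hd Hyd Hy1 Hn. pose proof iet_partition as Hp.
  destruct (partition_cover n p Hp y ltac:(unfold inI; lra)) as [k [Hk [Hk1 Hk2]]].
  destruct (f_translation k Hk) as [t Ht].
  assert (Hcut : (1 <= k)%nat -> In (p k) cuts) by (intros; apply In_cuts; eauto).
  assert (Hpk : p k < y).
  { destruct Hk1 as [|E]; auto. exfalso. destruct k as [|k].
    - destruct Hp as [H0 _]. lra.
    - apply Hn. rewrite <- E. apply Hcut. lia. }
  destruct (Rle_dec (p k) (y - d)) as [Hle|Hgt].
  - exists d. split; [lra|]. split; [auto|].
    exists t. intros u Hu. apply Ht. unfold inIk; lra.
  - exists (y - p k). split; [lra|]. split.
    + right. exists (p k). split; [|unfold seg; lra]. apply Hcut.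
      destruct k; [destruct Hp as [H0 _]; lra| lia].
    + exists t. intros u Hu. apply Ht. unfold inIk; lra.
Qed.

Lemma finv_left_step : left_translation_step (finv f) image_cuts.
Proof.
  intros y d Hd Hyd Hy1 Hn. pose proof iet_partition as Hp.
  destruct (finv_spec y ltac:(unfold inI; lra)) as [Hz Hfz].
  set (z := finv f y) in *.
  destruct (partition_cover n p Hp z Hz) as [k [Hk [Hk1 Hk2]]].
  destruct (f_translation k Hk) as [t Ht].
  assert (Hfz' : f z = z + t) by (apply Ht; split; auto).
  assert (Hfp : f (p k) = p k + t) by (apply Ht, (partition_point_inIk n p Hp); auto).
  assert (Hcut : In (f (p k)) image_cuts) by (apply In_image_cuts; eauto).
  assert (Hlt : f (p k) < y).
  { destruct Hk1 as [Hl|E]; [lra|]. exfalso. apply Hn. rewrite <- Hfz, <- E. auto. }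
  assert (Htr : forall u, f (p k) <= u <= y -> finv f u = u + - t).
  { intros u Hu. assert (Hin : inIk p k (u - t)) by (unfold inIk; lra).
    replace u with (f (u - t)) at 1 by (rewrite (Ht _ Hin); ring).
    rewrite finv_f; [ring|].
    pose proof (partition_point_inI n p Hp k Hk). unfold inI in *; unfold inIk in Hin; lra. }
  destruct (Rle_dec (f (p k)) (y - d)) as [Hle|Hgt].
  - exists d. split; [lra|]. split; [auto|]. exists (-t). intros u Hu. apply Htr. lra.
  - exists (y - f (p k)). split; [lra|]. split.
    + right. exists (f (p k)). split; auto. unfold seg; lra.
    + exists (-t). intros u Hu. apply Htr. lra.
Qed.

Lemma f_right_step (y d : R) : inI y -> 0 < d -> y + d <= 1 ->
  exists d', 0 < d' <= d /\ (d' = d \/ exists b, In b cuts /\ seg 1 y d b) /\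
    exists t, forall u, y <= u < y + d' -> f u = u + t.
Proof.
  intros Hy Hd Hyd. pose proof iet_partition as Hp.
  destruct (partition_cover n p Hp y Hy) as [k [Hk [Hk1 Hk2]]].
  destruct (f_translation k Hk) as [t Ht].
  destruct (Rle_dec (y + d) (p (S k))) as [Hle|Hgt].
  - exists d. split; [lra|]. split; [auto|].
    exists t. intros u Hu. apply Ht. unfold inIk; lra.
  - exists (p (S k) - y). split; [lra|]. split.
    + right. exists (p (S k)). split; [|unfold seg; lra]. apply In_cuts.
      exists (S k). split; auto. split; [lia|].
      destruct (Nat.eq_dec (S k) n) as [E|]; [|lia].
      exfalso. destruct Hp as [_ [H1 _]]. rewrite E, H1 in Hgt. lra.
    + exists t. intros u Hu. apply Ht. unfold inIk; lra.
Qed.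

Lemma f_right_translation (y : R) : inI y ->
  exists e, 0 < e /\ y + e <= 1 /\ exists t, forall u, y <= u < y + e -> f u = u + t.
Proof.
  intros Hy. unfold inI in Hy.
  destruct (f_right_step y (1 - y)) as [e [He [_ [t Ht]]]]; [unfold inI; lra| lra| lra|].
  exists e. split; [lra|]. split; [lra|]. eauto.
Qed.

Lemma iter_left_translation (m : nat) (y : R) :
  (forall i, (i < m)%nat -> -1 < Nat.iter i f y < 1 /\ ~ In (Nat.iter i f y) cuts) ->
  exists e, 0 < e /\ forall z, y - e <= z <= y -> Nat.iter m f z = z + (Nat.iter m f y - y).
Proof.
  induction m as [|m IH]; intros Hi.
  - exists 1. split; [lra|]. intros z _. simpl. ring.
  - destruct (IH (fun i Hi' => Hi i ltac:(lia))) as [e1 [He1 Ht1]].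
    destruct (Hi m ltac:(lia)) as [Hym Hnm].
    set (ym := Nat.iter m f y) in *.
    destruct (f_left_step ym (ym + 1)) as [d' [Hd' [_ [t Ht]]]]; auto; try lra.
    exists (Rmin e1 d'). split; [apply Rmin_glb_lt; lra|].
    intros z Hz. pose proof (Rmin_l e1 d'). pose proof (Rmin_r e1 d').
    rewrite !Nat.iter_succ, (Ht1 z) by lra. fold ym.
    rewrite (Ht (z + (ym - y))), (Ht ym) by lra. ring.
Qed.

Lemma iter_right_translation (m : nat) (y : R) : inI y ->
  exists e, 0 < e /\ exists t, forall z, y <= z < y + e -> Nat.iter m f z = z + t.
Proof.
  intros Hy. induction m as [|m [e1 [He1 [t1 Ht1]]]].
  - exists 1. split; [lra|]. exists 0. intros z _. simpl. ring.
  - destruct (f_right_translation (Nat.iter m f y)) as [e2 [He2 [_ [t2 Ht2]]]];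
      [apply iter_inI; auto using f_inI|].
    assert (Ey : Nat.iter m f y = y + t1) by (apply Ht1; lra).
    exists (Rmin e1 e2). split; [apply Rmin_glb_lt; lra|]. exists (t1 + t2).
    intros z Hz. pose proof (Rmin_l e1 e2). pose proof (Rmin_r e1 e2).
    rewrite Nat.iter_succ, (Ht1 z), Ht2 by lra. ring.
Qed.

Section InvariantSets.

Variable A : R -> Prop.
Hypothesis A_inI : forall z, A z -> inI z.
Hypothesis A_invariant : completely_invariant f A.

Lemma right_end_step (y d : R) : boundary 1 A y d ->
  exists d', 0 < d' <= d /\ (d' = d \/ exists b, In b cuts /\ seg 1 y d b) /\
    boundary 1 A (f y) d'.
Proof.
  intros Hr. pose proof (right_end_bounds A y d A_inI Hr) as Hyd.
  pose proof Hr as [Hy [_ [Hd _]]].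
  destruct (f_right_step y d Hy Hd Hyd) as [d' [Hd' [Hcut [t Ht]]]].
  exists d'. split; auto. split; auto.
  apply (boundary_translate f f_inI 1 A y d d' t); auto.
  intros u [->|Hu]; apply Ht; unfold seg in *; lra.
Qed.

(* [f] is a translation on a right neighbourhood of every point, so nothing stops the
   pigeonhole argument along the whole orbit. *)
Lemma right_end_periodic (y d : R) : boundary 1 A y d -> periodic f y.
Proof.
  intros Hr. apply NNPP. intros Hnp.
  apply (boundary_orbit_absurd 1 A f cuts y d); auto.
  - apply orbit_injective_of_aperiodic; auto using f_inI, f_injective. apply Hr.
  - intros j e He. apply right_end_step. exact He.
Qed.

End InvariantSets.

Hypothesis Hirr : irreducible n p f.
Hypothesis Hbil : billiard_like n p f.
Hypothesis Hkeane : modified_keane n p f.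

Lemma zero_cut : exists k0, (1 <= k0 < n)%nat /\ p k0 = 0.
Proof.
  destruct Hbil as [Hside _]. pose proof iet_partition as Hp.
  destruct (partition_cover n p Hp 0 ltac:(unfold inI; lra)) as [k [Hk Hk']].
  exists k. destruct (Hside k Hk) as [L|Rr].
  - apply L in Hk'. unfold in_left in Hk'. lra.
  - pose proof (Rr (p k) (partition_point_inIk n p Hp k Hk)) as Hr. unfold in_right in Hr.
    destruct Hk' as [Hk1 _]. split; [|lra].
    destruct k; [destruct Hp as [H0 _]; lra| lia].
Qed.

Lemma zero_image_of_cut : exists a0, (a0 < n)%nat /\ f (p a0) = 0.
Proof.
  destruct Hbil as [_ [Hside _]]. pose proof iet_partition as Hp.
  destruct Hf as [_ [_ [_ [_ [Hs _]]]]].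
  destruct (Hs 0 ltac:(unfold inI; lra)) as [z [Hz Hfz]].
  destruct (partition_cover n p Hp z Hz) as [k [Hk Hk']].
  exists k. split; auto.
  destruct (f_translation k Hk) as [t Htk].
  destruct Hk' as [[Hlt|E] Hk2]; [exfalso|rewrite E; auto].
  pose proof (partition_point_inIk n p Hp k Hk) as Hpk.
  destruct (Hside k Hk) as [L|Rr].
  - assert (H : in_left (f z)) by (apply L; split; lra).
    rewrite Hfz in H. unfold in_left in H; lra.
  - pose proof (Rr (p k) Hpk) as Hr. unfold in_right in Hr.
    rewrite (Htk (p k) Hpk) in Hr. rewrite (Htk z) in Hfz by (split; lra). lra.
Qed.

Lemma positive_cut : exists k, (1 <= k < n)%nat /\ 0 < p k.
Proof.
  destruct Hbil as [_ [_ [_ [k1 [k2 [H1 [H2 [Hne [R1 R2]]]]]]]]]. pose proof iet_partition as Hp.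
  pose proof (R1 _ (partition_point_inIk n p Hp k1 H1)) as P1.
  pose proof (R2 _ (partition_point_inIk n p Hp k2 H2)) as P2.
  unfold in_right in *.
  destruct (Nat.lt_gt_cases k1 k2) as [[Hl|Hl] _]; auto.
  - exists k2. split; [lia|]. pose proof (partition_lt n p Hp k1 k2 Hl ltac:(lia)). lra.
  - exists k1. split; [lia|]. pose proof (partition_lt n p Hp k2 k1 Hl ltac:(lia)). lra.
Qed.

Lemma keane_cut_zero (m a b : nat) : (1 <= m)%nat -> (a < n)%nat -> (1 <= b < n)%nat ->
  Nat.iter m f (p a) = p b -> p b = 0.
Proof.
  intros Hm Ha Hb E. apply NNPP. intros Hz.
  apply (Hkeane m a b Hm Ha ltac:(lia)); auto.
  pose proof (partition_gt_m1 n p iet_partition b ltac:(lia)). lra.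
Qed.

Lemma first_cut_hit (y : R) : (exists j, In (Nat.iter j f y) cuts) ->
  exists j b, (1 <= b < n)%nat /\ Nat.iter j f y = p b /\
    forall i, (i < j)%nat -> ~ In (Nat.iter i f y) cuts.
Proof.
  intros Hex. destruct (ex_least_nat _ Hex) as [j [Hj Hmin]].
  apply In_cuts in Hj. destruct Hj as [b [Hb E]]. exists j, b. auto.
Qed.

Section InvariantSets.

Variable A : R -> Prop.
Hypothesis A_inI : forall z, A z -> inI z.
Hypothesis A_invariant : completely_invariant f A.

(* If the orbit of a left end point reached 0 only after [j >= 1] steps, its [(j-1)]-th
   point would be the cut [p a0] with [f (p a0) = 0], or [-1]; neither is possible. *)
Lemma left_end_zero_of_first_cut (y d : R) (j : nat) : boundary (-1) A y d ->
  (forall i, (i < j)%nat -> ~ In (Nat.iter i f y) cuts) -> Nat.iter j f y = 0 -> y = 0.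
Proof.
  intros Hl Hj E. destruct j as [|j]; [exact E|exfalso].
  destruct (left_end_persists f cuts A f_inI f_left_step A_inI A_invariant y d (S j) Hl Hj j)
    as [e He]; [lia|].
  pose proof (left_end_bounds A _ _ A_inI He) as Hbound.
  destruct He as [Hin [_ [He _]]].
  destruct zero_image_of_cut as [a0 [Ha0 Hf0]].
  assert (Eu : Nat.iter j f y = p a0).
  { apply f_injective; [unfold inI in *; lra|apply (partition_point_inI n p iet_partition); auto|].
    rewrite Hf0. exact E. }
  destruct a0 as [|a0].
  - destruct iet_partition as [H0 _]. lra.
  - apply (Hj j ltac:(lia)). rewrite Eu. apply In_cuts. exists (S a0). split; auto; lia.
Qed.

(* Forward the orbit of [y] meets a cut [p b], backward it meets an image [f (p a)]:
   so [p b] lies in the forward orbit of [p a], and Keane forces [p b = 0]. *)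
Lemma aperiodic_left_end_zero (y d : R) : ~ periodic f y -> boundary (-1) A y d -> y = 0.
Proof.
  intros Hnp Hl. pose proof Hl as [Hy _].
  destruct (first_cut_hit y) as [j [b [Hb [Ej Hj]]]].
  { apply (left_end_orbit_meets_cuts f cuts A f_inI f_left_step A_inI A_invariant y d); auto.
    apply orbit_injective_of_aperiodic; auto using f_inI, f_injective. }
  destruct (left_end_orbit_meets_cuts (finv f) image_cuts A finv_inI finv_left_step A_inI
    (finv_invariant A A_invariant) y d) as [i Hi]; auto.
  { apply orbit_injective_of_aperiodic; auto using finv_inI, finv_injective, aperiodic_finv. }
  apply In_image_cuts in Hi. destruct Hi as [a [Ha Ea]].
  apply (left_end_zero_of_first_cut y d j); auto. rewrite Ej.
  apply (keane_cut_zero (j + S i) a b); auto; [lia|].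
  rewrite Nat.iter_add, Nat.iter_succ_r, Ea, f_iter_finv; auto.
Qed.

(* If the orbit of the periodic point [y] missed every cut, [f^m] would be the identity
   on a left neighbourhood of [y], where [A] has no periodic point. *)
Lemma periodic_left_end_zero (y d : R) : (forall z, A z -> ~ periodic f z) ->
  periodic f y -> boundary (-1) A y d -> y = 0.
Proof.
  intros A_aperiodic [m [Hm Em]] Hl.
  assert (Hhit : exists i, In (Nat.iter i f y) cuts).
  { apply NNPP. intros Hno.
    destruct (iter_left_translation m y) as [e [He Ht]].
    { intros i Hi. split; [|intros Hin; apply Hno; eauto].
      destruct (left_end_persists f cuts A f_inI f_left_step A_inI A_invariant y d m Hl
        (fun i _ Hin => Hno (ex_intro _ i Hin)) i ltac:(lia)) as [e' He'].
      pose proof (left_end_bounds A _ _ A_inI He').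
      destruct He' as [Hin [_ [He' _]]]. unfold inI in Hin. lra. }
    destruct Hl as [_ [_ [Hd Hseg]]].
    pose proof (Rmin_l e d). pose proof (Rmin_r e d). pose proof (Rmin_glb_lt e d 0 He Hd).
    apply (A_aperiodic (y - Rmin e d / 2)); [apply Hseg; unfold seg; lra|].
    exists m. split; auto. rewrite Ht, Em; [ring|lra]. }
  destruct (first_cut_hit y Hhit) as [j [b [Hb [Ej Hj]]]].
  apply (left_end_zero_of_first_cut y d j); auto. rewrite Ej.
  apply (keane_cut_zero m b b); auto; [lia|].
  rewrite <- Ej, <- Nat.iter_add, Nat.add_comm, Nat.iter_add, Em. reflexivity.
Qed.

End InvariantSets.

Lemma left_half_not_invariant : ~ (forall z, in_left z -> in_left (f z)).
Proof.
  intros Hinv. pose proof iet_partition as Hp.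
  destruct zero_cut as [k0 [Hk0 E0]].
  apply (Hirr k0 ltac:(lia) ltac:(lia)).
  intros x [j [Hj [Hx1 Hx2]]].
  assert (Hpj : p (S j) <= p k0) by (apply (partition_le n p Hp); lia).
  assert (Hp0 : p 0%nat <= p j) by (apply (partition_le n p Hp); lia).
  pose proof Hp as [H0 _].
  assert (Hfx : in_left (f x)) by (apply Hinv; unfold in_left; lra).
  destruct (partition_cover n p Hp (f x)) as [k [Hk Hk']]; [unfold inI, in_left in *; lra|].
  exists k. split; auto.
  destruct (Nat.lt_ge_cases k k0) as [|Hge]; auto.
  assert (p k0 <= p k) by (apply (partition_le n p Hp); lia).
  destruct Hk'. unfold in_left in Hfx. lra.
Qed.

(* By [left_half_or_complement], [W] or its complement would be [[-1, 0)]. *)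
Lemma no_proper_invariant_set (W : R -> Prop) :
  (forall z, W z -> inI z) -> right_open W -> completely_invariant f W ->
  (exists w, W w) -> (exists v, complI W v) ->
  (forall y d, boundary (-1) W y d -> y = 0) ->
  (forall y d, boundary (-1) (complI W) y d -> y = 0) ->
  (forall y d, ~ boundary 1 W y d) -> False.
Proof.
  intros W_inI Wopen Winv Hw Hv HlW HlV HrW.
  apply left_half_not_invariant. intros z Hz.
  assert (Hzi : inI z) by (unfold inI, in_left in *; lra).
  pose proof (f_inI z Hzi) as Hfz.
  destruct (left_half_or_complement W W_inI Wopen HlW HlV HrW Hw Hv) as [Hhalf|Hhalf].
  - apply (Hhalf _ Hfz), (Winv _ Hzi), (Hhalf _ Hzi), Hz.
  - apply (Hhalf _ Hfz), (complI_invariant f W f_inI Winv _ Hzi), (Hhalf _ Hzi), Hz.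
Qed.

Lemma periodic_set_invariant : completely_invariant f (fun z => inI z /\ periodic f z).
Proof.
  intros z Hz. split.
  - intros [_ [m [Hm E]]]. split; [apply f_inI; auto|].
    exists m. split; auto. rewrite <- Nat.iter_succ_r, Nat.iter_succ, E. auto.
  - intros [_ [m [Hm E]]]. split; auto. exists m. split; auto.
    rewrite <- Nat.iter_succ_r, Nat.iter_succ in E.
    apply f_injective; auto. apply iter_inI; auto using f_inI.
Qed.

Lemma periodic_set_right_open : right_open (fun z => inI z /\ periodic f z).
Proof.
  intros w [Hw [m [Hm E]]].
  destruct (iter_right_translation m w Hw) as [e [He [t Ht]]].
  assert (t = 0) by (pose proof (Ht w ltac:(lra)); lra). subst t.
  exists (Rmin e (1 - w)). split; [apply Rmin_glb_lt; unfold inI in Hw; lra|].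
  intros u Hu. pose proof (Rmin_l e (1 - w)). pose proof (Rmin_r e (1 - w)).
  split; [unfold inI in *; lra|]. exists m. split; auto. rewrite Ht; [ring| lra].
Qed.

Lemma no_periodic_point (z : R) : inI z -> ~ periodic f z.
Proof.
  intros Hz Hper. set (P := fun z => inI z /\ periodic f z).
  assert (P_inI : forall z, P z -> inI z) by (intros w [Hw _]; exact Hw).
  apply (no_proper_invariant_set P P_inI periodic_set_right_open periodic_set_invariant).
  - exists z. split; auto.
  - destruct positive_cut as [k [Hk Hpos]].
    exists (p k). split; [apply (partition_point_inI n p iet_partition); lia|].
    intros [_ [m [Hm E]]]. apply (Hkeane m k k Hm ltac:(lia) ltac:(lia)); auto; lra.
  - intros y d Hl. apply (aperiodic_left_end_zero P P_inI periodic_set_invariant y d); auto.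
    intros Hy. destruct Hl as [Hin [HnP _]]. apply HnP. split; auto.
  - intros y d Hl. pose proof Hl as [Hy [HnV _]].
    apply (periodic_left_end_zero (complI P) (fun w Hw => proj1 Hw)
      (complI_invariant f P f_inI periodic_set_invariant) y d); auto.
    + intros w [Hw HnP] Hpw. apply HnP. split; auto.
    + apply NNPP. intros Hny. apply HnV. split; auto. intros [_ Hpy]. auto.
  - intros y d Hr. pose proof Hr as [Hy [HnP _]].
    apply HnP. split; auto. exact (right_end_periodic P P_inI periodic_set_invariant y d Hr).
Qed.

Lemma in_orbit_f (x u : R) : in_orbit f x u -> in_orbit f x (f u).
Proof.
  intros [m [E|E]].
  - exists (S m). left. rewrite Nat.iter_succ, E. auto.
  - destruct m as [|m].
    + simpl in E. subst u. exists 1%nat. left. reflexivity.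
    + exists m. right. rewrite <- Nat.iter_succ_r. auto.
Qed.

Lemma in_orbit_of_f (x w : R) : inI x -> inI w -> in_orbit f x (f w) -> in_orbit f x w.
Proof.
  intros Hx Hw [m [E|E]].
  - destruct m as [|m].
    + simpl in E. exists 1%nat. right. simpl. auto.
    + rewrite Nat.iter_succ in E. exists m. left.
      apply f_injective; auto. apply iter_inI; auto using f_inI.
  - exists (S m). right. rewrite Nat.iter_succ_r. auto.
Qed.

Lemma avoids_orbit_right_open (x : R) : right_open (avoids_orbit f x).
Proof.
  intros w [Hw [d [Hd Hs]]]. exists (Rmin d (1 - w)).
  split; [apply Rmin_glb_lt; unfold inI in Hw; lra|].
  intros u Hu. pose proof (Rmin_l d (1 - w)). pose proof (Rmin_r d (1 - w)).
  split; [unfold inI in *; lra|]. exists (w + d - u). split; [lra|].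
  intros u' Hu'. apply Hs. lra.
Qed.

Lemma avoids_orbit_invariant (x : R) : inI x -> completely_invariant f (avoids_orbit f x).
Proof.
  intros Hx z Hz. destruct (f_right_translation z Hz) as [e [He [He1 [t Ht]]]].
  assert (Hfz : f z = z + t) by (apply Ht; lra).
  split; intros [_ [d [Hd Hs]]].
  - split; [apply f_inI; auto|].
    exists (Rmin d e). split; [apply Rmin_glb_lt; lra|].
    intros u Hu [Hui Hou]. pose proof (Rmin_l d e). pose proof (Rmin_r d e).
    assert (Ew : f (u - t) = u) by (rewrite Ht; [ring| lra]).
    assert (Hwi : inI (u - t)) by (unfold inI in *; lra).
    apply (Hs (u - t)); [lra|]. split; auto.
    apply in_orbit_of_f; auto. rewrite Ew. auto.
  - split; auto.
    exists (Rmin d e). split; [apply Rmin_glb_lt; lra|].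
    intros u Hu [Hui Hou]. pose proof (Rmin_l d e). pose proof (Rmin_r d e).
    apply (Hs (f u)); [rewrite (Ht u) by lra; lra|].
    split; [apply f_inI; auto| apply in_orbit_f; auto].
Qed.

Lemma avoids_orbit_of_far (x y eps : R) : inI y -> 0 < eps ->
  (forall z, inI z -> in_orbit f x z -> eps <= Rabs (z - y)) -> exists w, avoids_orbit f x w.
Proof.
  intros Hy Heps Hfar. unfold inI in Hy.
  pose proof (Rmax_l (-1) (y - eps/2)). pose proof (Rmax_r (-1) (y - eps/2)).
  set (w := Rmax (-1) (y - eps/2)) in *.
  assert (w <= y) by (apply Rmax_lub; lra).
  exists w. split; [unfold inI; lra|]. exists (eps/2). split; [lra|].
  intros u Hu [Hui Hou]. pose proof (Hfar u Hui Hou).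
  assert (Rabs (u - y) < eps) by (apply Rabs_def1; lra). lra.
Qed.

End IntervalExchange.

Theorem proposition8p4 (n : nat) (p : nat -> R) (f : R -> R) :
  is_IET n p f -> irreducible n p f -> billiard_like n p f ->
  modified_keane n p f -> minimal f.
Proof.
  intros Hf Hirr Hbil Hkeane x Hx y Hy eps Heps. apply NNPP. intros Hnot_dense.
  assert (Hfar : forall z, inI z -> in_orbit f x z -> eps <= Rabs (z - y)).
  { intros z Hz Ho. apply Rnot_lt_le. intros Hc. apply Hnot_dense. eauto. }
  set (W := avoids_orbit f x).
  assert (W_inI : forall z, W z -> inI z) by (intros z [Hz _]; exact Hz).
  pose proof (avoids_orbit_invariant n p f Hf x Hx) as Winv.
  pose proof (no_periodic_point n p f Hf Hirr Hbil Hkeane) as Haper.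
  apply (no_proper_invariant_set n p f Hf Hirr Hbil W W_inI (avoids_orbit_right_open f x) Winv).
  - exact (avoids_orbit_of_far f x y eps Hy Heps Hfar).
  - exists x. split; auto. intros [_ [d [Hd Hs]]]. apply (Hs x); [lra|].
    split; auto. exists 0%nat. left. reflexivity.
  - intros z d Hl. apply (aperiodic_left_end_zero n p f Hf Hbil Hkeane W W_inI Winv z d); auto.
    apply Haper, (proj1 Hl).
  - intros z d Hl. apply (aperiodic_left_end_zero n p f Hf Hbil Hkeane (complI W)
      (fun w Hw => proj1 Hw) (complI_invariant f W (f_inI n p f Hf) Winv) z d); auto.
    apply Haper, (proj1 Hl).
  - intros z d Hr. apply (Haper z (proj1 Hr)).
    exact (right_end_periodic n p f Hf W W_inI Winv z d Hr).
Qed.
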